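(* For any incentive-compatible selection mechanism $\mathcal{M}$ on directed forests, $Q(\mathcal{M})\le 4/5$.
   Context: Let $N$ be a finite set of $n$ vertices. A directed forest on $N$ is a directed acyclic graph on $N$ with every out-degree at most $1$; $\mathcal{F}^N$ is the set of such forests. $P(x;F)$ is the progeny of $x$ (number of vertices with a directed path to $x$, including $x$), $P^*(F)=\max_xP(x;F)$. A selection mechanism is a family (one for each $n$) of functions $\mathcal{M}:N\times\mathcal{F}^N\to[0,1]$ with $\sum_x\mathcal{M}(x;F)\le1$. It is incentive-compatible if $\mathcal{M}(x;F)=\mathcal{M}(x;F')$ whenever $F,F'$ differ only in the out-edge of $x$. Quality: $Q(\mathcal{M};F)=\sum_x\mathcal{M}(x;F)P(x;F)/P^*(F)$ and $Q(\mathcal{M})=\lim_{|N|\to\infty}\min_{F\in\mathcal{F}^N}Q(\mathcal{M};F)$. *)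

From HB Require Import structures.
From mathcomp Require Import all_boot all_order all_algebra.
From mathcomp Require Import reals.
Set Implicit Arguments. Unset Strict Implicit. Unset Printing Implicit Defensive.
Import Order.TTheory GRing.Theory Num.Theory.
Local Open Scope ring_scope.

(* Vertex set N = 'I_n.  A graph with every out-degree at most 1 is given by
   its (optional) out-neighbour map: the edge x -> y exists iff g x = Some y. *)
Definition graph (n : nat) := {ffun 'I_n -> option 'I_n}.

Definition walk n (g : graph n) (k : nat) (y : 'I_n) : option 'I_n :=
  iter k (fun o => obind g o) (Some y).

(* acyclic: no directed cycle.  Any cycle in an n-vertex graph has length
   at most n, so checking lengths 1..n is exhaustive. *)
Definition is_forest n (g : graph n) : bool :=
  [forall x : 'I_n, forall k : 'I_n.+1, (0 < k)%N ==> (walk g k x != Some x)].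

(* there is a directed path (possibly empty) from y to x; in a forest such a
   path has length < n, so bounding lengths by n is exhaustive. *)
Definition reaches n (g : graph n) (y x : 'I_n) : bool :=
  [exists k : 'I_n.+1, walk g k y == Some x].

Definition progeny n (g : graph n) (x : 'I_n) : nat := #|[set y | reaches g y x]|.
Definition max_progeny n (g : graph n) : nat := \max_(x : 'I_n) progeny g x.

(* A family of functions M_n : N x F^N -> R, one for each n.  Values on
   non-forests are irrelevant (all conditions below quantify over forests). *)
Definition mechanism (R : realType) := forall n : nat, 'I_n -> graph n -> R.

Definition is_selection_mechanism (R : realType) (M : mechanism R) : Prop :=
  forall n (g : graph n), is_forest g ->
    (forall x, 0 <= M n x g <= 1) /\ \sum_(x : 'I_n) M n x g <= 1.

Definition differ_only_at n (x : 'I_n) (g g' : graph n) : Prop :=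
  forall y, y != x -> g y = g' y.

Definition incentive_compatible (R : realType) (M : mechanism R) : Prop :=
  forall n (x : 'I_n) (g g' : graph n), is_forest g -> is_forest g' ->
    differ_only_at x g g' -> M n x g = M n x g'.

Definition quality (R : realType) (M : mechanism R) n (g : graph n) : R :=
  \sum_(x : 'I_n) M n x g * (progeny g x)%:R / (max_progeny g)%:R.

(* The set of forests is finite and nonempty (the
   empty forest); for a selection mechanism Q(M;F) <= 1, so the top element 1
   used as neutral element does not affect the minimum. *)
Definition min_quality (R : realType) (M : mechanism R) (n : nat) : R :=
  \big[Num.min/1]_(g : graph n | is_forest g) quality M g.

Definition converges_to (R : realType) (u : nat -> R) (l : R) : Prop :=
  forall eps : R, 0 < eps -> exists N : nat, forall n, (N <= n)%N -> `|u n - l| < eps.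

(* Consider the paths 0 -> 1 and 0 -> 1 -> 2, all other vertices being isolated.
   They differ only in the out-edge of vertex 1, so an incentive-compatible
   mechanism selects 1 with the same probability b in both.  In the first path
   1 is the root, every other vertex has progeny 1 and P^* = 2, so the quality
   is at most (1 + b) / 2; in the second path every progeny is at most P^* = 3
   and that of 1 is 2, so the quality is at most (3 - b) / 3.  The smaller of
   the two bounds is at most 4/5, with equality at b = 3/5. *)

From HB Require Import structures.
From mathcomp Require Import all_boot all_order all_algebra.
From mathcomp Require Import reals.
From mathcomp Require Import zify lra.
Import Order.TTheory GRing.Theory Num.Theory.
Local Open Scope ring_scope.

Lemma card_ord_lt n k : (k <= n)%N -> #|[set y : 'I_n | (y < k)%N]| = k.
Proof.
move=> le_kn; rewrite -sum1_card (eq_bigl (fun y : 'I_n => (y < k)%N)) => [|y]; last by rewrite inE.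
by rewrite (big_ord_narrow le_kn) sum1_card card_ord.
Qed.

Section Walks.
Variables (n : nat) (g : graph n).

Lemma walkS k y : walk g k.+1 y = obind g (walk g k y).
Proof. by []. Qed.

Lemma walk_increasing : (forall u w, g u = Some w -> (u < w)%N) ->
  forall k u v, walk g k u = Some v -> (u + k <= v)%N.
Proof.
move=> g_incr; elim=> [|k IHk] u v; first by case=> ->; rewrite addn0.
rewrite walkS; case walk_k: (walk g k u) => [w|] //= /g_incr.
by have := IHk _ _ walk_k; lia.
Qed.

Lemma increasing_is_forest : (forall u w, g u = Some w -> (u < w)%N) -> is_forest g.
Proof.
move=> g_incr; apply/forallP => x; apply/forallP => k; apply/implyP => k_gt0.
by apply/eqP => /(walk_increasing g_incr); lia.
Qed.

End Walks.

Definition path_graph n k : graph n :=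
  [ffun u : 'I_n => if (u.+1 < k)%N then insub u.+1 else None].

Section PathGraph.
Variables n k : nat.
Local Notation g := (path_graph n k).

Lemma path_graph_edge u w : g u = Some w <-> w = u.+1 :> nat /\ (u.+1 < k)%N.
Proof.
rewrite ffunE; case: ifP => [lt_uk|]; last by split=> [|[]].
case: insubP => [w' _ val_w'|not_lt_un].
  split=> [[<-] //|[val_w _]]; congr Some; apply: val_inj; by rewrite /= val_w val_w'.
split=> [//|[val_w _]]; case/negP: not_lt_un; rewrite -val_w; exact: ltn_ord.
Qed.

Lemma path_graph_forest : is_forest g.
Proof. by apply: increasing_is_forest => u w /path_graph_edge [-> _]. Qed.

Lemma walk_path_graph (y x : 'I_n) j : (y + j <= x < k)%N ->
  exists2 w, walk g j y = Some w & w = (y + j)%N :> nat.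
Proof.
case/andP; elim: j => [|j IHj] le_x lt_xk; first by exists y; rewrite ?addn0.
have [u walk_u val_u] := IHj ltac:(lia) lt_xk.
have lt_un : (u.+1 < n)%N by have := ltn_ord x; lia.
exists (Ordinal lt_un); last by rewrite /= val_u addnS.
by rewrite walkS walk_u /=; apply/path_graph_edge; split=> //=; lia.
Qed.

Lemma reaches_path_graph y x : reaches g y x = (y == x) || (y < x < k)%N.
Proof.
apply/existsP/idP => [[j /eqP]|].
  elim: (j : nat) x => [|i IHi] x; first by case=> ->; rewrite eqxx.
  rewrite walkS; case: (walk g i y) (IHi) => [u|] //= {}IHi /path_graph_edge [val_x lt_xk].
  by have := IHi u erefl; rewrite -!val_eqE /= val_x; lia.
case/orP=> [/eqP <-|/andP [lt_yx lt_xk]]; first by exists ord0.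
have lt_j : (x - y < n.+1)%N by have := ltn_ord x; lia.
have [w walk_w val_w] := @walk_path_graph y x (x - y) ltac:(apply/andP; split; lia).
exists (Ordinal lt_j); rewrite /= walk_w; apply/eqP; congr Some; apply: val_inj => /=; lia.
Qed.

Lemma progeny_path_graph x : progeny g x = if (x < k)%N then x.+1 else 1%N.
Proof.
rewrite /progeny; case: ifP => lt_xk.
  rewrite -(@card_ord_lt n x.+1 (ltn_ord x)); apply: eq_card => y.
  by rewrite !inE reaches_path_graph lt_xk andbT ltnS [(y <= x)%N]leq_eqVlt.
rewrite -(cards1 x); apply: eq_card => y.
by rewrite !inE reaches_path_graph lt_xk andbF orbF.
Qed.

Lemma max_progeny_path_graph : (0 < k <= n)%N -> max_progeny g = k.
Proof.
case/andP=> k_gt0 le_kn; apply/eqP; rewrite eqn_leq; apply/andP; split.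
  by apply/bigmax_leqP => x _; rewrite progeny_path_graph; case: ifP.
have lt_kn : (k.-1 < n)%N by lia.
apply: leq_trans (leq_bigmax (Ordinal lt_kn)).
by rewrite progeny_path_graph /= ltn_predL k_gt0 prednK.
Qed.

Lemma quality_path_graph (R : realType) (M : mechanism R) : (0 < k <= n)%N ->
  quality M g = (\sum_x M n x g * (if (x < k)%N then x.+1 else 1%N)%:R) / k%:R.
Proof.
move=> k_range; rewrite /quality mulr_suml max_progeny_path_graph //.
by apply: eq_bigr => x _; rewrite progeny_path_graph.
Qed.

End PathGraph.

Lemma path_graph_differ_only_at {n} (x : 'I_n) :
  differ_only_at x (path_graph n x.+1) (path_graph n x.+2).
Proof.
move=> y; rewrite -val_eqE => /= y_ne_x; rewrite !ffunE !ltnS.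
by rewrite [(y <= x)%N]leq_eqVlt (negbTE y_ne_x).
Qed.

Lemma weighted_sum_le (R : numDomainType) (I : finType) (m w : I -> R) (i0 : I) (c d : R) :
  (forall i, 0 <= m i) -> w i0 <= c + d -> (forall i, i != i0 -> w i <= c) ->
  \sum_i m i * w i <= c * \sum_i m i + d * m i0.
Proof.
move=> m_ge0 w_i0 w_le; rewrite (bigD1 i0) //= [\sum_i m i](bigD1 i0) //=.
have le_rest : \sum_(i | i != i0) m i * w i <= c * \sum_(i | i != i0) m i.
  by rewrite mulr_sumr; apply: ler_sum => i /w_le w_i; rewrite mulrC ler_wpM2r.
rewrite mulrDr addrAC -mulrDl [(c + d) * _]mulrC.
exact: lerD (ler_wpM2l (m_ge0 i0) w_i0) le_rest.
Qed.

Section PathQuality.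
Context {R : realType} {M : mechanism R} (M_sel : is_selection_mechanism M).

Lemma quality_path_graph_le_root {n} (x : 'I_n) : (0 < x)%N ->
  quality M (path_graph n x.+1) <= (x%:R + M n x (path_graph n x.+1)) / x.+1%:R.
Proof.
move=> x_gt0; have [M_01 M_sum] := M_sel _ _ (path_graph_forest n x.+1).
rewrite quality_path_graph ?ltn_ord // ler_pM2r ?invr_gt0 ?ltr0n //.
apply: le_trans (@weighted_sum_le _ _ _ _ x x%:R 1 _ _ _) _.
- by move=> i; case/andP: (M_01 i).
- by rewrite ltnSn -natr1.
- by move=> i; rewrite -val_eqE => /= i_ne_x; rewrite ler_nat; case: ifP => //; lia.
- by rewrite mul1r lerD2r -[leRHS]mulr1 ler_wpM2l ?ler0n.
Qed.

Lemma quality_path_graph_le_root_child {n} (x : 'I_n) : (x.+2 <= n)%N ->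
  quality M (path_graph n x.+2) <= (x.+2%:R - M n x (path_graph n x.+2)) / x.+2%:R.
Proof.
move=> le_n; have [M_01 M_sum] := M_sel _ _ (path_graph_forest n x.+2).
rewrite quality_path_graph ?le_n // ler_pM2r ?invr_gt0 ?ltr0n //.
apply: le_trans (@weighted_sum_le _ _ _ _ x x.+2%:R (-1) _ _ _) _.
- by move=> i; case/andP: (M_01 i).
- by rewrite ifT // -[x.+2]addn1 natrD addrK.
- by move=> i _; rewrite ler_nat; case: ifP => //; lia.
- by rewrite mulN1r lerD2r -[leRHS]mulr1 ler_wpM2l ?ler0n.
Qed.

End PathQuality.

Lemma min_quality_le_quality {R : realType} (M : mechanism R) {n} {g : graph n} :
  is_forest g -> min_quality M n <= quality M g.
Proof. by move=> g_forest; rewrite /min_quality (bigD1 g) //= ge_min lexx. Qed.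

Lemma min_quality_le_four_fifths (R : realType) (M : mechanism R) n :
  is_selection_mechanism M -> incentive_compatible M -> (2 < n)%N ->
  min_quality M n <= 4 / 5.
Proof.
move=> M_sel M_ic n_gt2; pose v1 : 'I_n := Ordinal (ltnW n_gt2).
have same_prob : M n v1 (path_graph n 2) = M n v1 (path_graph n 3).
  exact: M_ic (path_graph_forest n 2) (path_graph_forest n 3) (path_graph_differ_only_at v1).
have q2 := quality_path_graph_le_root M_sel v1 isT.
have q3 := quality_path_graph_le_root_child M_sel v1 n_gt2.
have min2 := min_quality_le_quality M (path_graph_forest n 2).
have min3 := min_quality_le_quality M (path_graph_forest n 3).
rewrite /= in q2; rewrite /= -same_prob in q3.
have [small|large] := lerP (M n v1 (path_graph n 2)) (3 / 5).
  apply: le_trans min2 (le_trans q2 _); rewrite ler_pdivrMr //; lra.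
apply: le_trans min3 (le_trans q3 _); rewrite ler_pdivrMr //; lra.
Qed.

Lemma converges_to_le {R : realType} {u : nat -> R} {l : R} (c : R) (N : nat) :
  converges_to u l -> (forall n, (N <= n)%N -> u n <= c) -> l <= c.
Proof.
move=> u_l u_le; rewrite leNgt; apply/negP => lt_cl.
have eps_gt0 : 0 < l - c by rewrite subr_gt0.
have [N' /(_ (maxn N N') (leq_maxr _ _))] := u_l _ eps_gt0.
have := u_le (maxn N N') (leq_maxl _ _).
by rewrite ltr_norml => ? /andP[? ?]; lra.
Qed.

Theorem proposition1 (R : realType) (M : mechanism R) (q : R) :
  is_selection_mechanism M -> incentive_compatible M ->
  converges_to (min_quality M) q ->
  q <= 4 / 5.
Proof.
move=> M_sel M_ic min_quality_q.
by apply: (converges_to_le _ 3 min_quality_q) => n; apply: min_quality_le_four_fifths.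
Qed.
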